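(* Let $\mathcal A\subset\mathbb R^n$ be compact with diameter $D_{\mathcal A}<\infty$ and $\mathcal X=\mathrm{conv}(\mathcal A)$ be $\alpha$-strongly convex for some $\alpha>0$. Let $f$ be convex and differentiable with $L$-Lipschitz gradient. Run the AC-FW algorithm with the closed-loop Frank-Wolfe subroutine and a damping sequence satisfying Condition (D), let $\eta\in(1,2)$, and let $\{h_t\}_{t\ge0}$ be the elements of $\mathcal G\cap\mathcal I_\eta$ in increasing order. Then for every $t\ge0$, $$f(x_{h_{t+1}})-f(x^\star)\le\max\left\{\frac{\eta}{2},\ 1-\left(1-\frac{\eta}{2}\right)\frac{\alpha\|\nabla f(x_{h_t})\|_2}{8L}\right\}\bigl(f(x_{h_t})-f(x^\star)\bigr).$$ If in addition $f$ is $\mu$-strongly convex for some $\mu>0$, then for every $t\ge0$, $$f(x_{h_{t+1}})-f(x^\star)\le\max\left\{\frac{\eta}{2},\ 1-\left(1-\frac{\eta}{2}\right)\frac{\alpha\sqrt{\mu\,(f(x_{h_t})-f(x^\star))}}{8\sqrt2\,L}\right\}\bigl(f(x_{h_t})-f(x^\star)\bigr).$$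
   Context: $D_{\mathcal A}:=\sup_{x,y\in\mathcal A}\|x-y\|_2$; $\|\nabla f(x)-\nabla f(y)\|_2\le L\|x-y\|_2$ for all $x,y\in\mathbb R^n$. $x^\star$ is an optimal solution of $\min_{x\in\mathcal X}f(x)$. $\mathcal X$ is $\alpha$-strongly convex if for all $\rho\in[0,1]$, $x,y\in\mathcal X$ and $z\in\mathbb R^n$ with $\|z\|_2\le1$: $\rho x+(1-\rho)y+\frac{\rho(1-\rho)\alpha\|x-y\|_2^2}{2}z\in\mathcal X$. $f$ is $\mu$-strongly convex if $f(y)\ge f(x)+\nabla f(x)^\top(y-x)+\frac\mu2\|y-x\|_2^2$ for all $x,y$. For $x\ne y$, $\ell(x,y):=2|f(y)-f(x)-\nabla f(x)^\top(y-x)|/\|y-x\|_2^2$, $\ell(x,x):=0$. AC-FW algorithm with closed-loop Frank-Wolfe subroutine: given $\{r_t\}_{t\ge0}$, pick $x_{-1}\in\mathcal A$, $x_0\in\arg\min_{v\in\mathcal A}\nabla f(x_{-1})^\top v$, $L_0:=\ell(x_{-1},x_0)$. For $t=0,1,\dots$: $v_t\in\arg\min_{v\in\mathcal A}\nabla f(x_t)^\top v$; $d_t:=x_t-v_t$, $\gamma_t^{\max}:=1$; $\gamma_t:=\min\{\nabla f(x_t)^\top d_t/(L_t\|d_t\|_2^2),\gamma_t^{\max}\}$; $\bar x_{t+1}:=x_t-\gamma_td_t$; $L_{t+1}:=\max\{\ell(x_t,\bar x_{t+1}),r_tL_t\}$; $x_{t+1}:=\bar x_{t+1}$ if $f(\bar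 x_{t+1})<f(x_t)$, else $x_{t+1}:=x_t$. $\mathcal I_\eta:=\{t\ge0:L_{t+1}\le\eta L_t\}$; $\mathcal G:=\{t\ge0:\gamma_t^{\max}\ge1\text{ or }\gamma_t<\gamma_t^{\max}\}$ (here $\mathcal G$ is all of $\mathbb Z_+$). Condition (D): $r_t\in(0,1]$ for all $t$ and $\prod_{t\ge0}r_t\in(0,1]$. *)

From HB Require Import structures.
From mathcomp Require Import all_boot all_order all_algebra.
From mathcomp Require Import all_classical all_reals all_analysis.
Set Implicit Arguments. Unset Strict Implicit. Unset Printing Implicit Defensive.
Import Order.TTheory GRing.Theory Num.Theory.
Import numFieldNormedType.Exports.
Local Open Scope classical_set_scope.
Local Open Scope ring_scope.

Section Defs.
Variables (R : realType) (n : nat).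
Local Notation vec := 'rV[R]_n.

Definition dot (u w : vec) : R := \sum_(i < n) u ord0 i * w ord0 i.
Definition norm2 (u : vec) : R := Num.sqrt (dot u u).

Definition conv_hull (A : set vec) : set vec :=
  [set y | exists (k : nat) (w : 'I_k -> R) (p : 'I_k -> vec),
     (forall i, 0 <= w i) /\ \sum_(i < k) w i = 1 /\ (forall i, A (p i)) /\
     y = \sum_(i < k) w i *: p i].

Definition strongly_convex_set (alpha : R) (X : set vec) : Prop :=
  forall (rho : R) (x y z : vec), 0 <= rho <= 1 -> X x -> X y -> norm2 z <= 1 ->
    X (rho *: x + (1 - rho) *: y
       + (rho * (1 - rho) * alpha * (norm2 (x - y)) ^+ 2 / 2) *: z).

Definition convex_fun (f : vec -> R) : Prop :=
  forall (t : R) (x y : vec), 0 <= t <= 1 ->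
    f (t *: x + (1 - t) *: y) <= t * f x + (1 - t) * f y.

Definition is_gradient (f : vec -> R) (grad : vec -> vec) : Prop :=
  forall x : vec, differentiable f x /\ forall h : vec, 'd f x h = dot (grad x) h.

Definition lipschitz_grad (grad : vec -> vec) (L : R) : Prop :=
  forall x y : vec, norm2 (grad x - grad y) <= L * norm2 (x - y).

Definition strongly_convex_fun (mu : R) (f : vec -> R) (grad : vec -> vec) : Prop :=
  forall x y : vec, f y >= f x + dot (grad x) (y - x) + mu / 2 * (norm2 (y - x)) ^+ 2.

Definition is_minimizer (f : vec -> R) (X : set vec) (xs : vec) : Prop :=
  X xs /\ forall x, X x -> f xs <= f x.

Definition ell (f : vec -> R) (grad : vec -> vec) (x y : vec) : R :=
  if x == y then 0
  else 2 * `|f y - f x - dot (grad x) (y - x)| / (norm2 (y - x)) ^+ 2.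

Definition lmo (A : set vec) (g v : vec) : Prop :=
  A v /\ forall u, A u -> dot g v <= dot g u.

Definition condition_D (r : nat -> R) : Prop :=
  (forall t, 0 < r t <= 1) /\
  exists p : R, 0 < p <= 1 /\ (fun N : nat => \prod_(i < N) r i) @ \oo --> p.

Definition gamma_max : R := 1.

(* step size gamma_t = min{ grad^T d / (L ||d||^2), gamma_max }, with the
   convention that the ratio is +infinity (so gamma_t = gamma_max) when
   L_t ||d_t||^2 = 0 *)
Definition step (grad : vec -> vec) (xt vt : vec) (Lt : R) : R :=
  let d := xt - vt in
  if Lt * (norm2 d) ^+ 2 == 0 then gamma_max
  else Num.min (dot (grad xt) d / (Lt * (norm2 d) ^+ 2)) gamma_max.

Definition xbar (grad : vec -> vec) (xt vt : vec) (Lt : R) : vec :=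
  xt - step grad xt vt Lt *: (xt - vt).

(* one full run of AC-FW with the closed-loop FW subroutine:
   xm1 = x_{-1}, x t = x_t, v t = v_t, Ls t = L_t *)
Definition ACFW_run (f : vec -> R) (grad : vec -> vec) (A : set vec)
    (r : nat -> R) (xm1 : vec) (x v : nat -> vec) (Ls : nat -> R) : Prop :=
  A xm1 /\ lmo A (grad xm1) (x 0%N) /\ Ls 0%N = ell f grad xm1 (x 0%N) /\
  forall t : nat,
    lmo A (grad (x t)) (v t) /\
    Ls t.+1 = Num.max (ell f grad (x t) (xbar grad (x t) (v t) (Ls t))) (r t * Ls t) /\
    x t.+1 = (if f (xbar grad (x t) (v t) (Ls t)) < f (x t)
              then xbar grad (x t) (v t) (Ls t) else x t).

Definition I_eta (eta : R) (Ls : nat -> R) (t : nat) : Prop := Ls t.+1 <= eta * Ls t.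
Definition G_set (grad : vec -> vec) (x v : nat -> vec) (Ls : nat -> R) (t : nat) : Prop :=
  1 <= gamma_max \/ step grad (x t) (v t) (Ls t) < gamma_max.

Definition enumerates (S : nat -> Prop) (h : nat -> nat) : Prop :=
  (forall t, (h t < h t.+1)%N) /\ (forall k, S k <-> exists t, h t = k).

End Defs.

(* On the iterations in I_eta the accepted smoothness estimate satisfies
   ell(x_k, xbar_k) <= eta L_k, so the clipped short step
   gamma_k = min(gap_k / (L_k |d_k|^2), 1) decreases f by at least
   (1 - eta/2) gamma_k gap_k, where gap_k = <grad f(x_k), x_k - v_k>.  By convexity
   the Frank-Wolfe gap dominates the primal gap, and by alpha-strong convexity of the
   hull it dominates alpha |grad f(x_k)| |d_k|^2 / 4; with L_k <= 2L this gives
   gamma_k >= min(1, alpha |grad f(x_k)| / (8L)).  As f(x_t) is nonincreasing, the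
   contraction obtained at h_t carries over to h_{t+1} >= h_t + 1.  Under
   mu-strong convexity, 2 mu (f(x) - f(xs)) <= |grad f(x)|^2 turns the
   gradient-dependent rate into the second one. *)

From HB Require Import structures.
From mathcomp Require Import all_boot all_order all_algebra.
From mathcomp Require Import all_classical all_reals all_analysis.
From mathcomp Require Import ring lra.
Import Order.TTheory GRing.Theory Num.Theory.
Import numFieldNormedType.Exports.
Local Open Scope classical_set_scope.
Local Open Scope ring_scope.

Section InnerProduct.
Context {R : realType} {n : nat}.
Local Notation vec := 'rV[R]_n.
Implicit Types u w z : vec.

Lemma dotC u w : dot u w = dot w u.
Proof. by apply: eq_bigr => i _; rewrite mulrC. Qed.

Lemma dotDr u w z : dot u (w + z) = dot u w + dot u z.
Proof. by rewrite /dot -big_split; apply: eq_bigr => i _; rewrite mxE mulrDr. Qed.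

Lemma dotZr c u w : dot u (c *: w) = c * dot u w.
Proof. by rewrite /dot mulr_sumr; apply: eq_bigr => i _; rewrite mxE mulrCA. Qed.

Lemma dotNr u w : dot u (- w) = - dot u w.
Proof. by rewrite -scaleN1r dotZr mulN1r. Qed.

Lemma dotBr u w z : dot u (w - z) = dot u w - dot u z.
Proof. by rewrite dotDr dotNr. Qed.

Lemma dotDl u w z : dot (w + z) u = dot w u + dot z u.
Proof. by rewrite dotC dotDr !(dotC u). Qed.

Lemma dotZl c u w : dot (c *: w) u = c * dot w u.
Proof. by rewrite dotC dotZr dotC. Qed.

Lemma dotNl u w : dot (- w) u = - dot w u.
Proof. by rewrite dotC dotNr dotC. Qed.

Lemma dotBl u w z : dot (w - z) u = dot w u - dot z u.
Proof. by rewrite dotDl dotNl. Qed.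

Lemma dot0r u : dot u 0 = 0.
Proof. by rewrite -(scale0r 0) dotZr mul0r. Qed.

Lemma dot_sumr u k (c : 'I_k -> R) (p : 'I_k -> vec) :
  dot u (\sum_(i < k) c i *: p i) = \sum_(i < k) c i * dot u (p i).
Proof.
elim/big_rec2: _ => [|i y1 y2 _ <-]; first exact: dot0r.
by rewrite dotDr dotZr.
Qed.

Lemma dot_ge0 u : 0 <= dot u u.
Proof. by apply: sumr_ge0 => i _; rewrite -expr2 sqr_ge0. Qed.

Lemma dot_eq0 u : (dot u u == 0) = (u == 0).
Proof.
apply/idP/eqP => [|->]; last by rewrite dot0r.
rewrite psumr_eq0 => [/allP u0|i _]; last by rewrite -expr2 sqr_ge0.
apply/rowP => i; rewrite mxE.
by have := u0 i (mem_index_enum _); rewrite /= mulf_eq0 orbb => /eqP.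
Qed.

Lemma norm2_ge0 u : 0 <= norm2 u.
Proof. exact: sqrtr_ge0. Qed.

Lemma norm2_sqr u : norm2 u ^+ 2 = dot u u.
Proof. by rewrite sqr_sqrtr ?dot_ge0. Qed.

Lemma norm2_0 : norm2 (0 : vec) = 0.
Proof. by rewrite /norm2 dot0r sqrtr0. Qed.

Lemma norm2_eq0 u : (norm2 u == 0) = (u == 0).
Proof. by rewrite -sqrf_eq0 norm2_sqr dot_eq0. Qed.

Lemma norm2Z c u : norm2 (c *: u) = `|c| * norm2 u.
Proof. by rewrite /norm2 dotZl dotZr mulrA -expr2 sqrtrM ?sqr_ge0 // sqrtr_sqr. Qed.

Lemma dot_young c u w : 2 * c * dot u w <= norm2 u ^+ 2 + c ^+ 2 * norm2 w ^+ 2.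
Proof.
have := dot_ge0 (u - c *: w).
by rewrite dotBl !dotBr !dotZl !dotZr (dotC w u) -!norm2_sqr; lra.
Qed.

Lemma dot_le_lipschitz {L u w} :
  0 < L -> norm2 u <= L * norm2 w -> dot u w <= L * norm2 w ^+ 2.
Proof.
move=> L0 uw; have := dot_young L u w.
have : norm2 u ^+ 2 <= L ^+ 2 * norm2 w ^+ 2.
  by have := norm2_ge0 u; rewrite -exprMn; nra.
nra.
Qed.

End InnerProduct.

Section ConvexHull.
Context {R : realType} {n : nat} {A : set 'rV[R]_n}.

Lemma conv_hull_sub : A `<=` conv_hull A.
Proof.
move=> a Aa; exists 1%N, (fun=> 1), (fun=> a).
by rewrite !big_ord1 scale1r; split=> //; rewrite ler01.
Qed.

Lemma lmo_conv_hull {g w u} : lmo A g w -> conv_hull A u -> dot g w <= dot g u.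
Proof.
move=> [_ wmin] [k [c [p [c0 [c1 [Ap ->]]]]]].
rewrite dot_sumr -[dot g w]mul1r -c1 mulr_suml.
by apply: ler_sum => i _; apply: ler_wpM2l => //; apply: wmin.
Qed.

Lemma strongly_convex_set_convex alpha (X : set 'rV[R]_n) rho y z :
  strongly_convex_set alpha X -> 0 <= rho <= 1 -> X y -> X z ->
  X (rho *: y + (1 - rho) *: z).
Proof.
move=> sX rho01 Xy Xz; have := sX rho y z 0 rho01 Xy Xz.
by rewrite norm2_0 scaler0 addr0; apply; rewrite ler01.
Qed.

(* The midpoint of [y, w], pushed by alpha |y - w|^2 / 8 against the direction
   of g, stays in the hull; comparing it with the LMO answer w gives the bound. *)
Lemma lmo_gap_strongly_convex alpha g y w :
  strongly_convex_set alpha (conv_hull A) -> conv_hull A y -> lmo A g w ->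
  alpha / 4 * norm2 g * norm2 (y - w) ^+ 2 <= dot g (y - w).
Proof.
move=> sX Xy lmow.
have [->|g0] := eqVneq g 0; first by rewrite norm2_0 mulr0 mul0r dotC dot0r.
have gpos : 0 < norm2 g by rewrite lt_def norm2_eq0 g0 norm2_ge0.
have z1 : norm2 (- (norm2 g)^-1 *: g) <= 1.
  by rewrite norm2Z normrN ger0_norm ?invr_ge0 ?norm2_ge0 // mulVf ?gt_eqF.
have half01 : 0 <= (2^-1 : R) <= 1 by apply/andP; split; lra.
have := lmo_conv_hull lmow (sX 2^-1 y w _ half01 Xy (conv_hull_sub _ lmow.1) z1).
rewrite !dotDr !dotZr mulNr -norm2_sqr.
have -> : (norm2 g)^-1 * norm2 g ^+ 2 = norm2 g by rewrite expr2 mulKf ?gt_eqF.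
rewrite dotNr; nra.
Qed.

End ConvexHull.

Section SmoothConvex.
Context {R : realType} {n : nat} (f : 'rV[R]_n -> R) (grad : 'rV[R]_n -> 'rV[R]_n).
Implicit Types x y z : 'rV[R]_n.

Lemma convex_first_order x y :
  convex_fun f -> is_gradient f grad -> f x + dot (grad x) (y - x) <= f y.
Proof.
move=> cvxf /(_ x) [fdiff dfE]; set u := y - x.
have Du : (fun t : R => t^-1 *: ((f \o shift x) (t *: u) - f x)) @ 0^'+ --> 'D_u f x.
  exact/cvg_dnbhs_at_right/(diff_derivable fdiff).
rewrite -lerBrDl -dfE -deriveE //; apply: (cvgr_to_le Du); near=> t.
have t0 : 0 < t by near: t; exact: nbhs_right_gt.
have t1 : t <= 1 by near: t; exact: nbhs_right_le ltr01.
have t01 : 0 <= 1 - t <= 1 by apply/andP; split; lra.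
have := cvxf (1 - t) x y t01.
rewrite /= -[_ *: (_ - _)]/(_ * _) ler_pdivrMl // -lerBlDr.
have -> : (1 - t) *: x + (1 - (1 - t)) *: y = t *: u + x.
  have -> : 1 - (1 - t) = t by ring.
  by rewrite /u scalerBl scale1r scalerBr addrAC [RHS]addrAC [x + _]addrC.
lra.
Unshelve. all: by end_near.
Qed.

Lemma ell_ge0 x y : 0 <= ell f grad x y.
Proof. by rewrite /ell; case: eqP => // _; rewrite divr_ge0 ?sqr_ge0 ?mulr_ge0. Qed.

Lemma ell_descent x y :
  f y <= f x + dot (grad x) (y - x) + ell f grad x y / 2 * norm2 (y - x) ^+ 2.
Proof.
rewrite /ell; case: eqP => [->|/eqP xy].
  by rewrite subrr dot0r norm2_0 !mul0r !addr0.
have d0 : norm2 (y - x) != 0 by rewrite norm2_eq0 subr_eq0 eq_sym.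
set e := f y - f x - dot (grad x) (y - x).
have -> : 2 * `|e| / norm2 (y - x) ^+ 2 / 2 * norm2 (y - x) ^+ 2 = `|e| by field.
by have := ler_norm e; rewrite /e; lra.
Qed.

(* The crude bound 2L, rather than L, needs no integral form of the descent lemma. *)
Lemma ell_le_lipschitz L x y :
  convex_fun f -> is_gradient f grad -> 0 < L -> lipschitz_grad grad L ->
  ell f grad x y <= 2 * L.
Proof.
move=> cvxf gradf L0 lipg; rewrite /ell; case: eqP => [_|/eqP xy]; first lra.
have d0 : 0 < norm2 (y - x) ^+ 2.
  by rewrite exprn_gt0 // lt_def norm2_eq0 subr_eq0 eq_sym xy norm2_ge0.
rewrite ler_pdivrMr //.
have lower := convex_first_order x y cvxf gradf.
have upper := convex_first_order y x cvxf gradf.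
have := dot_le_lipschitz L0 (lipg y x).
rewrite ger0_norm; last lra.
by rewrite -opprB dotNr dotBl in upper *; lra.
Qed.

Lemma strongly_convex_gap_le x y {mu} :
  0 < mu -> strongly_convex_fun mu f grad ->
  2 * mu * (f x - f y) <= norm2 (grad x) ^+ 2.
Proof.
move=> mu0 /(_ x y) scf; have := dot_young (- mu) (grad x) (y - x).
rewrite sqrrN; nra.
Qed.

Lemma sqrt_strongly_convex_gap_le x y {mu} :
  0 < mu -> strongly_convex_fun mu f grad ->
  Num.sqrt (mu * (f x - f y)) / Num.sqrt 2 <= norm2 (grad x).
Proof.
move=> mu0 scf; have gap := strongly_convex_gap_le x y mu0 scf.
have g0 := norm2_ge0 (grad x).
have sqrt2 : 1 <= Num.sqrt (2 : R) by rewrite -[leLHS]sqrtr1 ler_sqrt // ler1n.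
rewrite ler_pdivrMr ?(lt_le_trans ltr01) //; apply: le_trans (ler_peMr g0 sqrt2).
rewrite -(ger0_norm g0) -sqrtr_sqr ler_wsqrtr //.
by have := sqr_ge0 (norm2 (grad x)); lra.
Qed.

End SmoothConvex.

Section ClippedStep.
Context {R : realType}.
Implicit Types a b c eta : R.

Definition clipped_ratio a b : R := if b == 0 then 1 else Num.min (a / b) 1.

Lemma clipped_ratio_ge0 a b : 0 <= a -> 0 <= b -> 0 <= clipped_ratio a b.
Proof.
by move=> a0 b0; rewrite /clipped_ratio; case: eqP; rewrite ?le_min ?divr_ge0 ?ler01.
Qed.

Lemma clipped_ratio_le1 a b : clipped_ratio a b <= 1.
Proof. by rewrite /clipped_ratio; case: eqP; rewrite ?ge_min lexx ?orbT. Qed.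

Lemma clipped_ratio_mul_le a b : 0 <= a -> 0 <= b -> clipped_ratio a b * b <= a.
Proof.
move=> a0 b0; rewrite /clipped_ratio; case: eqP => [->|/eqP bn0]; first by rewrite mulr0.
by rewrite -ler_pdivlMr ?lt_def ?bn0 // ge_min lexx.
Qed.

Lemma clipped_ratio_ge a b c :
  0 <= b -> c * b <= a -> Num.min c 1 <= clipped_ratio a b.
Proof.
move=> b0 cba; rewrite /clipped_ratio; case: eqP => [_|/eqP bn0]; first by rewrite ge_min lexx orbT.
have b_gt0 : 0 < b by rewrite lt_def bn0.
by rewrite le_min !ge_min ler_pdivlMr // cba lexx orbT.
Qed.

(* The factor 1 - (1 - eta/2) min(c, 1) is exactly the max of the two factors. *)
Lemma gap_contraction {eta c gam h0 G Fd} :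
  eta < 2 -> 0 <= c -> 0 <= h0 <= G -> Num.min c 1 <= gam ->
  Fd <= - (1 - eta / 2) * gam * G ->
  h0 + Fd <= Num.max (eta / 2) (1 - (1 - eta / 2) * c) * h0.
Proof.
move=> eta2 c0 /andP[h00 h0G] gam_ge decr.
have m0 : 0 <= Num.min c 1 by rewrite le_min c0 ler01.
have mG : Num.min c 1 * h0 <= gam * G by rewrite ler_pM.
have progress : Fd <= - (1 - eta / 2) * Num.min c 1 * h0 by nra.
have [c1|c1] := leP c 1.
- rewrite min_l // in progress.
  apply: (@le_trans _ _ ((1 - (1 - eta / 2) * c) * h0)); first nra.
  by rewrite ler_wpM2r // le_max lexx orbT.
- rewrite (min_r (ltW c1)) in progress.
  apply: (@le_trans _ _ (eta / 2 * h0)); first nra.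
  by rewrite ler_wpM2r // le_max lexx.
Qed.

Lemma contraction_factor_antitone eta c c' :
  eta < 2 -> c' <= c ->
  Num.max (eta / 2) (1 - (1 - eta / 2) * c) <= Num.max (eta / 2) (1 - (1 - eta / 2) * c').
Proof. by move=> eta2 cc; rewrite ge_max !le_max lexx /=; apply/orP; right; nra. Qed.

End ClippedStep.

Lemma stepE {R : realType} {n : nat} (grad : 'rV[R]_n -> 'rV[R]_n) xt vt Lt :
  step grad xt vt Lt = clipped_ratio (dot (grad xt) (xt - vt)) (Lt * norm2 (xt - vt) ^+ 2).
Proof. by []. Qed.

Lemma xbar_conv_comb {R : realType} {n : nat} (grad : 'rV[R]_n -> 'rV[R]_n) xt vt Lt
    (gam := step grad xt vt Lt) :
  xbar grad xt vt Lt = (1 - gam) *: xt + (1 - (1 - gam)) *: vt.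
Proof.
rewrite /xbar -/gam; have -> : 1 - (1 - gam) = gam by ring.
by rewrite scalerBl scale1r scalerBr opprB addrA [RHS]addrAC.
Qed.

Section ACFW.
Context {R : realType} {n : nat} {A : set 'rV[R]_n} {alpha L eta : R}.
Context {f : 'rV[R]_n -> R} {grad : 'rV[R]_n -> 'rV[R]_n} {xs : 'rV[R]_n}.
Context {r : nat -> R} {xm1 : 'rV[R]_n} {x v : nat -> 'rV[R]_n} {Ls : nat -> R}.
Hypothesis alpha_ge0 : 0 <= alpha.
Hypothesis cvxX : strongly_convex_set alpha (conv_hull A).
Hypothesis cvxf : convex_fun f.
Hypothesis gradf : is_gradient f grad.
Hypothesis L_gt0 : 0 < L.
Hypothesis lipg : lipschitz_grad grad L.
Hypothesis xsmin : is_minimizer f (conv_hull A) xs.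
Hypothesis r_le1 : forall t, r t <= 1.
Hypothesis run : ACFW_run f grad A r xm1 x v Ls.
Hypothesis eta_ge0 : 0 <= eta.
Hypothesis eta_lt2 : eta < 2.

Local Notation gap t := (dot (grad (x t)) (x t - v t)).
Local Notation gam t := (step grad (x t) (v t) (Ls t)).
Local Notation xbar_ t := (xbar grad (x t) (v t) (Ls t)).

Lemma Ls_ge0 t : 0 <= Ls t.
Proof.
case: t => [|t]; first by rewrite run.2.2.1 ell_ge0.
by have [_ [-> _]] := run.2.2.2 t; rewrite le_max ell_ge0.
Qed.

Lemma Ls_le t : Ls t <= 2 * L.
Proof.
elim: t => [|t IH]; first by rewrite run.2.2.1 (ell_le_lipschitz f grad).
have [_ [-> _]] := run.2.2.2 t.
by rewrite ge_max (ell_le_lipschitz f grad) //= (le_trans _ IH) // ler_piMl ?Ls_ge0.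
Qed.

Lemma iterate_in_hull t : conv_hull A (x t).
Proof.
elim: t => [|t IH]; first exact/conv_hull_sub/run.2.1.1.
have [lmot [_ ->]] := run.2.2.2 t; case: ifP => // _.
have gap0 : 0 <= gap t by rewrite dotBr subr_ge0 (lmo_conv_hull lmot).
have gam0 : 0 <= gam t by rewrite stepE clipped_ratio_ge0 // mulr_ge0 ?Ls_ge0 ?sqr_ge0.
have gam1 : gam t <= 1 by rewrite stepE clipped_ratio_le1.
rewrite xbar_conv_comb; apply: strongly_convex_set_convex cvxX _ IH (conv_hull_sub _ lmot.1).
by apply/andP; split; lra.
Qed.

Lemma gap_ge0 t : 0 <= gap t.
Proof. by rewrite dotBr subr_ge0 (lmo_conv_hull (run.2.2.2 t).1 (iterate_in_hull t)). Qed.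

Lemma primal_gap_le_gap t : f (x t) - f xs <= gap t.
Proof.
have := convex_first_order f grad (x t) xs cvxf gradf.
have := lmo_conv_hull (run.2.2.2 t).1 xsmin.1.
by rewrite !dotBr; lra.
Qed.

Lemma f_iterate_nonincreasing : nonincreasing_seq (f \o x).
Proof.
apply/nonincreasing_seqP => t /=; have [_ [_ ->]] := run.2.2.2 t.
by case: ifP => // /ltW.
Qed.

Lemma f_next_le_xbar t : f (x t.+1) <= f (xbar_ t).
Proof.
have [_ [_ ->]] := run.2.2.2 t.
by case: ifP => [_|/negbT]; rewrite ?lexx // -leNgt.
Qed.

(* On I_eta, ell(x_k, xbar_k) <= L_{k+1} <= eta L_k, and clipping gives
   gam_k L_k |d_k|^2 <= gap_k: the quadratic term eats at most eta/2 of the gain. *)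
Lemma sufficient_decrease k : I_eta eta Ls k ->
  f (x k.+1) - f (x k) <= - (1 - eta / 2) * gam k * gap k.
Proof.
move=> Ik; set d := x k - v k; set N := norm2 d ^+ 2.
have ell_le : ell f grad (x k) (xbar_ k) <= eta * Ls k.
  by apply: le_trans Ik; have [_ [-> _]] := run.2.2.2 k; rewrite le_max lexx.
have gam0 : 0 <= gam k by rewrite stepE clipped_ratio_ge0 ?gap_ge0 // mulr_ge0 ?Ls_ge0 ?sqr_ge0.
have clip : gam k * (Ls k * N) <= gap k.
  by rewrite stepE clipped_ratio_mul_le ?gap_ge0 // mulr_ge0 ?Ls_ge0 ?sqr_ge0.
have curv : ell f grad (x k) (xbar_ k) / 2 * (gam k ^+ 2 * N) <= eta / 2 * gam k * gap k.
  have gN : 0 <= gam k ^+ 2 * N by rewrite mulr_ge0 ?sqr_ge0.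
  apply: le_trans (_ : eta * Ls k / 2 * (gam k ^+ 2 * N) <= _).
    by rewrite ler_wpM2r // ler_pM2r.
  have -> : eta * Ls k / 2 * (gam k ^+ 2 * N) = eta / 2 * gam k * (gam k * (Ls k * N)).
    by ring.
  by rewrite ler_wpM2l // mulr_ge0 // divr_ge0.
have := ell_descent f grad (x k) (xbar_ k).
have -> : xbar_ k - x k = (- gam k) *: d by rewrite /xbar addrAC subrr add0r scaleNr.
rewrite dotZr norm2Z normrN ger0_norm // exprMn -/N.
have := f_next_le_xbar k; lra.
Qed.

Lemma step_ge k : Num.min (alpha * norm2 (grad (x k)) / (8 * L)) 1 <= gam k.
Proof.
set c := alpha * _ / _; set N := norm2 (x k - v k) ^+ 2.
have c0 : 0 <= c by rewrite divr_ge0 ?mulr_ge0 ?norm2_ge0 ?(ltW L_gt0).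
rewrite stepE; apply: clipped_ratio_ge; first by rewrite mulr_ge0 ?Ls_ge0 ?sqr_ge0.
apply: le_trans (_ : c * (2 * L * N) <= _).
  by rewrite ler_wpM2l // ler_wpM2r ?sqr_ge0 ?Ls_le.
have -> : c * (2 * L * N) = alpha / 4 * norm2 (grad (x k)) * N by rewrite /c; field; rewrite gt_eqF.
exact: lmo_gap_strongly_convex cvxX (iterate_in_hull k) (run.2.2.2 k).1.
Qed.

Lemma iterate_contraction k : I_eta eta Ls k ->
  f (x k.+1) - f xs <=
  Num.max (eta / 2) (1 - (1 - eta / 2) * (alpha * norm2 (grad (x k))) / (8 * L))
  * (f (x k) - f xs).
Proof.
move=> Ik; rewrite -[_ * (alpha * _) / _]mulrA.
have -> : f (x k.+1) - f xs = (f (x k) - f xs) + (f (x k.+1) - f (x k)) by ring.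
apply: (gap_contraction eta_lt2 _ _ (step_ge k) (sufficient_decrease k Ik)).
  by rewrite divr_ge0 ?mulr_ge0 ?norm2_ge0 ?(ltW L_gt0).
by rewrite subr_ge0 primal_gap_le_gap xsmin.2 //; apply: iterate_in_hull.
Qed.

End ACFW.

Theorem lemma10 (R : realType) (n : nat) (A : set 'rV[R]_n) (alpha L : R)
    (f : 'rV[R]_n -> R) (grad : 'rV[R]_n -> 'rV[R]_n) (xs : 'rV[R]_n)
    (r : nat -> R) (xm1 : 'rV[R]_n) (x v : nat -> 'rV[R]_n) (Ls : nat -> R)
    (eta : R) (h : nat -> nat) :
  compact A ->
  0 < alpha -> strongly_convex_set alpha (conv_hull A) ->
  convex_fun f -> is_gradient f grad -> 0 < L -> lipschitz_grad grad L ->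
  is_minimizer f (conv_hull A) xs ->
  condition_D r ->
  ACFW_run f grad A r xm1 x v Ls ->
  1 < eta < 2 ->
  enumerates (fun t => G_set grad x v Ls t /\ I_eta eta Ls t) h ->
  (forall t : nat,
     f (x (h t.+1)) - f xs <=
     Num.max (eta / 2)
       (1 - (1 - eta / 2) * (alpha * norm2 (grad (x (h t)))) / (8 * L))
     * (f (x (h t)) - f xs)) /\
  (forall mu : R, 0 < mu -> strongly_convex_fun mu f grad ->
   forall t : nat,
     f (x (h t.+1)) - f xs <=
     Num.max (eta / 2)
       (1 - (1 - eta / 2) * (alpha * Num.sqrt (mu * (f (x (h t)) - f xs)))
            / (8 * Num.sqrt 2 * L))
     * (f (x (h t)) - f xs)).
Proof.
move=> _ alpha0 cvxX cvxf gradf L0 lipg xsmin [r01 _] run /andP[eta1 eta2] [h_incr hE].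
have r_le1 t : r t <= 1 by case/andP: (r01 t).
have eta0 : 0 <= eta by lra.
have contraction t := iterate_contraction (ltW alpha0) cvxX cvxf gradf L0 lipg xsmin r_le1
  run eta0 eta2 (h t) ((hE (h t)).2 (ex_intro _ t erefl)).2.
have rate t : f (x (h t.+1)) - f xs <=
    Num.max (eta / 2) (1 - (1 - eta / 2) * (alpha * norm2 (grad (x (h t)))) / (8 * L))
    * (f (x (h t)) - f xs).
  apply: le_trans (contraction t); rewrite lerD2r.
  exact: f_iterate_nonincreasing run _ _ (h_incr t).
split=> // mu mu0 scf t; apply: le_trans (rate t) _.
have gap0 : 0 <= f (x (h t)) - f xs.
  by rewrite subr_ge0 xsmin.2 //; apply: iterate_in_hull cvxX run _.
rewrite ler_wpM2r // -!(mulrA (1 - eta / 2)) contraction_factor_antitone //.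
have -> : alpha * Num.sqrt (mu * (f (x (h t)) - f xs)) / (8 * Num.sqrt 2 * L)
    = alpha / (8 * L) * (Num.sqrt (mu * (f (x (h t)) - f xs)) / Num.sqrt 2).
  by field; rewrite ?gt_eqF ?sqrtr_gt0.
rewrite [leRHS]mulrAC ler_wpM2l ?sqrt_strongly_convex_gap_le //.
by rewrite divr_ge0 ?mulr_ge0 // ltW.
Qed.
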